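(* Let $f$, $u_{0s}$, $c_0$, $b_0$, $p$ be as in the context and assume $M:=\sup_{x\le0}|b_0(x)c_0(x)|<\infty$. Then for every $\sigma\in\mathbb{C}$ with $\Re(\sigma)>M/c_0(0)$, $$\int_{-\infty}^{0}b_0(\xi)e^{-\sigma p(\xi)}\,d\xi\neq c_0(0);$$ that is, there are no eigenvalues (roots of the dispersion relation) with real part exceeding $M/c_0(0)$.
   Context: Let $q>0$ and let $f:(-\infty,0]\times(0,\infty)\to[0,\infty)$ be such that for each $u>0$, $x\mapsto f(x,u)$ is continuous and integrable, $\partial f/\partial u$ exists and is continuous, and $\int_{-\infty}^0 f(x,u)\,dx=q/2$ independently of $u$. Let $u_{0s}=2\sqrt q$. Define $c_0(x)=\sqrt{2\int_{-\infty}^x f(y,u_{0s})\,dy}$ for $x\le0$ (so $c_0(0)=u_{0s}/2$), and assume $c_0(x)>0$ for all $x\le0$. Define $b_0(x)=\frac{\partial f}{\partial u}(x,u_{0s})+\frac{f(x,u_{0s})}{2c_0(x)}$ and $p(x)=\int_x^0 dy/c_0(y)$. An eigenvalue is a $\sigma$ with $\Re\sigma>0$ satisfying $\int_{-\infty}^{0}b_0(\xi)e^{-\sigma p(\xi)}d\xi=c_0(0)$. *)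

From Stdlib Require Export Reals Lra ClassicalEpsilon.
Open Scope R_scope.

(* Proper Riemann integral value (proof-irrelevant); unspecified if not integrable. *)
Definition is_RInt (g : R -> R) (a b l : R) : Prop :=
  exists pr : Riemann_integrable g a b, RiemannInt pr = l.

Definition RInt (g : R -> R) (a b : R) : R :=
  epsilon (inhabits 0) (fun l => is_RInt g a b l).

Definition is_improper_int (g : R -> R) (x l : R) : Prop :=
  (forall a, a <= x -> exists pr : Riemann_integrable g a x, True) /\
  (forall eps, 0 < eps -> exists A, forall a, a <= A -> a <= x ->
      forall pr : Riemann_integrable g a x, Rabs (RiemannInt pr - l) < eps).

Definition improper_int (g : R -> R) (x : R) : R :=
  epsilon (inhabits 0) (fun l => is_improper_int g x l).

Definition c0 (f : R -> R -> R) (u0s x : R) : R :=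
  sqrt (2 * improper_int (fun y => f y u0s) x).

(* b_0(x) = df/du (x,u0s) + f(x,u0s) / (2 c_0(x)) ; fu is the partial derivative. *)
Definition b0 (f fu : R -> R -> R) (u0s x : R) : R :=
  fu x u0s + f x u0s / (2 * c0 f u0s x).

Definition pfun (f : R -> R -> R) (u0s x : R) : R :=
  RInt (fun y => / c0 f u0s y) x 0.

(* sigma = a + i b is an eigenvalue (Re sigma = a > 0) iff
   int_{-infty}^0 b0(xi) e^{-sigma p(xi)} dxi = c0(0), written out in real and
   imaginary parts: e^{-sigma p} = e^{-a p} (cos (b p) - i sin (b p)). *)
Definition dispersion_root (f fu : R -> R -> R) (u0s a b : R) : Prop :=
  is_improper_int
    (fun xi => b0 f fu u0s xi * exp (- a * pfun f u0s xi) * cos (b * pfun f u0s xi))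
    0 (c0 f u0s 0) /\
  is_improper_int
    (fun xi => - (b0 f fu u0s xi * exp (- a * pfun f u0s xi) * sin (b * pfun f u0s xi)))
    0 0.

(* Write sigma = a + i b with a > M / c0(0).  Since p' = -1/c0, the function
   e^{-a p} has derivative (a / c0) e^{-a p}, so for every A <= 0
       int_A^0 (a / c0) e^{-a p} = 1 - e^{-a p(A)} <= 1.
   The bound |b0 c0| <= M gives  b0 e^{-a p} cos(b p) <= (M/a) (a / c0) e^{-a p},
   hence every partial integral of the real part of the dispersion relation is
   at most M/a < c0(0), and so is its limit: the real part cannot equal c0(0).

   The only problem-specific work is to
   show that c0 agrees on (-oo,0] with a continuous positive function on all of
   R: c0(y)^2 = q - 2 int_y^0 f(., u0s), and f(., u0s) is extended to R by
   clamping its argument to (-oo,0]; then p is the integral of the inverse of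
   that extension, and the theorem is the exponential-weight estimate applied
   to it. *)

From Pilot Require Import Defs.
From Coquelicot Require Import Coquelicot.

Lemma Defs_RInt_val g a b (pr : Riemann_integrable g a b) :
  Defs.RInt g a b = RiemannInt pr.
Proof.
  unfold Defs.RInt.
  assert (H : Defs.is_RInt g a b (epsilon (inhabits 0) (fun l => Defs.is_RInt g a b l))).
  { apply epsilon_spec. exists (RiemannInt pr), pr. reflexivity. }
  destruct H as [pr' H]. rewrite <- H. apply RiemannInt_P5.
Qed.

Lemma improper_int_unique g x l1 l2 :
  is_improper_int g x l1 -> is_improper_int g x l2 -> l1 = l2.
Proof.
  intros [I1 L1] [_ L2]. destruct (Req_dec l1 l2) as [|Hne]; [assumption|exfalso].
  assert (He : 0 < Rabs (l1 - l2) / 2)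
    by (assert (0 < Rabs (l1 - l2)) by (apply Rabs_pos_lt; lra); lra).
  destruct (L1 _ He) as [A1 H1]. destruct (L2 _ He) as [A2 H2].
  set (a := Rmin (Rmin A1 A2) x).
  assert (ha1 : a <= A1) by (unfold a; eapply Rle_trans; apply Rmin_l).
  assert (ha2 : a <= A2)
    by (unfold a; apply Rle_trans with (Rmin A1 A2); [apply Rmin_l| apply Rmin_r]).
  assert (hax : a <= x) by apply Rmin_r.
  destruct (I1 a hax) as [pr _].
  specialize (H1 a ha1 hax pr). specialize (H2 a ha2 hax pr).
  revert H1 H2 He. split_Rabs; lra.
Qed.

Lemma improper_int_val g x l : is_improper_int g x l -> improper_int g x = l.
Proof.
  intro H. unfold improper_int. apply improper_int_unique with g x; [|exact H].
  apply epsilon_spec. exists l; exact H.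
Qed.

Lemma improper_int_tail g L y (pr : Riemann_integrable g y 0) :
  is_improper_int g 0 L -> y <= 0 -> is_improper_int g y (L - RiemannInt pr).
Proof.
  intros [Iint Lim] Hy. split.
  - intros a Ha. destruct (Iint a (Rle_trans _ _ _ Ha Hy)) as [pra _].
    exists (RiemannInt_P22 pra (conj Ha Hy)). exact I.
  - intros e He. destruct (Lim e He) as [A HA]. exists (Rmin A y).
    intros a Ha Hay pray.
    assert (ha : a <= A) by (eapply Rle_trans; [exact Ha| apply Rmin_l]).
    destruct (Iint a (Rle_trans _ _ _ Hay Hy)) as [pra _].
    specialize (HA a ha (Rle_trans _ _ _ Hay Hy) pra).
    rewrite <- (RiemannInt_P26 pray pr pra) in HA.
    replace (RiemannInt pray - (L - RiemannInt pr))
      with (RiemannInt pray + RiemannInt pr - L) by ring.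
    exact HA.
Qed.

Lemma improper_int_le g x l K :
  is_improper_int g x l ->
  (forall a (pr : Riemann_integrable g a x), a <= x -> RiemannInt pr <= K) ->
  l <= K.
Proof.
  intros [Iint Lim] Hb. apply Rnot_lt_le. intro HK.
  destruct (Lim (l - K)) as [A HA]; [lra|].
  destruct (Iint (Rmin A x) (Rmin_r _ _)) as [pr _].
  specialize (HA _ (Rmin_l _ _) (Rmin_r _ _) pr).
  specialize (Hb _ pr (Rmin_r _ _)).
  revert HA. split_Rabs; lra.
Qed.

Lemma continuous_of_eps_delta (g : R -> R) x :
  (forall eps, 0 < eps -> exists delta, 0 < delta /\
     forall y, Rabs (y - x) < delta -> Rabs (g y - g x) < eps) ->
  continuous g x.
Proof.
  intro H. apply continuity_pt_filterlim, continuity_pt_locally.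
  intros [e He]. destruct (H e He) as [d [Hd Hy]].
  exists (mkposreal d Hd). intros y Hb. apply Hy. exact Hb.
Qed.

Lemma Rmin0_lipschitz x y : Rabs (Rmin y 0 - Rmin x 0) <= Rabs (y - x).
Proof. unfold Rmin; destruct (Rle_dec y 0), (Rle_dec x 0); split_Rabs; lra. Qed.

Lemma clamp_continuous (g : R -> R) :
  (forall x, x <= 0 -> forall eps, 0 < eps -> exists delta, 0 < delta /\
     forall y, y <= 0 -> Rabs (y - x) < delta -> Rabs (g y - g x) < eps) ->
  forall x, continuous (fun y => g (Rmin y 0)) x.
Proof.
  intros Hg x. apply continuous_of_eps_delta. intros e He.
  destruct (Hg (Rmin x 0) (Rmin_r _ _) e He) as [d [Hd Hy]].
  exists d. split; [exact Hd|]. intros y Hyx. apply Hy; [apply Rmin_r|].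
  eapply Rle_lt_trans; [apply Rmin0_lipschitz| exact Hyx].
Qed.

Lemma lower_primitive_derive (g : R -> R) :
  (forall x, continuous g x) ->
  forall x, is_derive (fun x => RInt g x 0) x (- g x).
Proof.
  intros Hg x. apply (@is_derive_RInt' R_NormedModule g _ x 0); [|apply Hg].
  exists (mkposreal 1 Rlt_0_1). intros y _.
  exact (RInt_correct g y 0
           (@ex_RInt_continuous R_CompleteNormedModule g y 0 (fun z _ => Hg z))).
Qed.

Lemma lower_primitive_continuous (g : R -> R) :
  (forall x, continuous g x) -> forall x, continuous (fun x => RInt g x 0) x.
Proof.
  intros Hg x. apply (@ex_derive_continuous R_AbsRing R_NormedModule).
  eexists. apply lower_primitive_derive, Hg.
Qed.

Section ExponentialWeight.

Variable c : R -> R.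
Hypothesis c_cont : forall x, continuous c x.
Hypothesis c_pos : forall x, 0 < c x.
Variable a : R.
Hypothesis a_pos : 0 < a.

Let P x := RInt (fun y => / c y) x 0.
Let weight x := a / c x * exp (- a * P x).

Lemma inv_c_continuous x : continuous (fun y => / c y) x.
Proof. apply continuous_Rinv_comp; [apply c_cont| generalize (c_pos x); lra]. Qed.

Lemma weight_continuous x : continuous weight x.
Proof.
  apply (continuous_mult (fun y => a / c y) (fun y => exp (- a * P y))).
  - apply (continuous_mult (fun _ => a) (fun y => / c y));
      [apply continuous_const| apply inv_c_continuous].
  - apply continuous_exp_comp, (continuous_mult (fun _ => - a) P);
      [apply continuous_const| apply lower_primitive_continuous, inv_c_continuous].
Qed.

(* e^{-a P} is a primitive of the weight, because P' = -1/c. *)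
Lemma exp_travel_derive x : is_derive (fun x => exp (- a * P x)) x (weight x).
Proof.
  assert (HP : is_derive (fun x => - a * P x) x (- a * - / c x)).
  { apply is_derive_scal, (lower_primitive_derive (fun y => / c y) inv_c_continuous). }
  assert (H := is_derive_comp exp _ x _ _ (is_derive_exp _) HP).
  replace (weight x) with (scal (- a * - / c x) (exp (- a * P x))); [exact H|].
  unfold weight, scal; simpl; unfold mult; simpl; unfold Rdiv; ring.
Qed.

(* int_A^0 (a/c) e^{-a P} = 1 - e^{-a P(A)} <= 1. *)
Lemma weight_integral_le_1 A : RInt weight A 0 <= 1.
Proof.
  rewrite (is_RInt_unique _ _ _ _ (@is_RInt_derive R_CompleteNormedModule _ weight A 0
             (fun x _ => exp_travel_derive x) (fun x _ => weight_continuous x))).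
  assert (HP0 : P 0 = 0) by apply (RInt_point 0 (fun y => / c y)).
  unfold minus, plus, opp; simpl. rewrite HP0, Rmult_0_r, exp_0.
  generalize (exp_pos (- a * P A)). lra.
Qed.

Lemma partial_integral_bound (B g : R -> R) (M A : R)
    (pr : Riemann_integrable g A 0) :
  A <= 0 ->
  (forall x, A <= x <= 0 -> Rabs (B x * c x) <= M) ->
  (forall x, A <= x <= 0 -> g x <= Rabs (B x) * exp (- a * P x)) ->
  RiemannInt pr <= M / a.
Proof.
  intros HA HBc Hg.
  assert (HM : 0 <= M) by (eapply Rle_trans; [apply Rabs_pos| apply (HBc 0); lra]).
  assert (HMa : 0 <= M / a) by (apply Rmult_le_pos; [lra| left; apply Rinv_0_lt_compat, a_pos]).
  assert (weight_ex : ex_RInt weight A 0).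
  { apply (@ex_RInt_continuous R_CompleteNormedModule); intros; apply weight_continuous. }
  rewrite <- RInt_Reals. eapply Rle_trans.
  - apply (RInt_le _ (fun x => M / a * weight x) A 0 HA (ex_RInt_Reals_1 _ _ _ pr)).
    + exact (ex_RInt_scal weight A 0 (M / a) weight_ex).
    + intros x Hx.
      assert (Hcx := c_pos x). assert (He := exp_pos (- a * P x)).
      specialize (HBc x (conj (Rlt_le _ _ (proj1 Hx)) (Rlt_le _ _ (proj2 Hx)))).
      rewrite Rabs_mult, (Rabs_right (c x)) in HBc by lra.
      assert (HB : Rabs (B x) <= M / c x) by (apply Rle_div_r; lra).
      replace (M / a * weight x) with (M / c x * exp (- a * P x))
        by (unfold weight; field; lra).
      eapply Rle_trans; [apply Hg; lra|]. nra.
  - replace (RInt (fun x => M / a * weight x) A 0) with (scal (M / a) (RInt weight A 0))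
      by (rewrite <- RInt_scal by exact weight_ex; reflexivity).
    unfold scal; simpl; unfold mult; simpl.
    generalize (weight_integral_le_1 A). nra.
Qed.

End ExponentialWeight.

Lemma c0_continuous_extension (f : R -> R -> R) (q u : R) :
  (forall x, x <= 0 -> forall eps, 0 < eps -> exists delta, 0 < delta /\
     forall y, y <= 0 -> Rabs (y - x) < delta -> Rabs (f y u - f x u) < eps) ->
  is_improper_int (fun x => f x u) 0 (q / 2) ->
  exists ct : R -> R,
    (forall x, continuous ct x) /\ (forall y, ct y = c0 f u (Rmin y 0)).
Proof.
  intros Hcont Hint.
  set (gt := fun y => f (Rmin y 0) u).
  assert (gt_cont : forall x, continuous gt x)
    by exact (clamp_continuous (fun y => f y u) Hcont).
  exists (fun y => sqrt (q - 2 * RInt gt (Rmin y 0) 0)). split.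
  - intro x. apply continuous_sqrt_comp.
    apply (continuous_comp (fun y => Rmin y 0) (fun z => q - 2 * RInt gt z 0)).
    + apply continuous_of_eps_delta. intros e He. exists e. split; [exact He|].
      intros y Hy. eapply Rle_lt_trans; [apply Rmin0_lipschitz| exact Hy].
    + apply continuity_pt_filterlim, continuity_pt_minus; [apply continuity_pt_const; now intros|].
      apply continuity_pt_scal, continuity_pt_filterlim, lower_primitive_continuous, gt_cont.
  - intro y. set (y' := Rmin y 0). assert (Hy' : y' <= 0) by apply Rmin_r.
    assert (Hagree : forall t, Rmin y' 0 < t < Rmax y' 0 -> gt t = f t u).
    { intros t Ht. rewrite Rmin_left, Rmax_right in Ht by exact Hy'.
      unfold gt. rewrite Rmin_left by lra. reflexivity. }
    assert (Hex : ex_RInt (fun t => f t u) y' 0).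
    { apply (ex_RInt_ext gt _ _ _ Hagree),
        (@ex_RInt_continuous R_CompleteNormedModule); intros; apply gt_cont. }
    set (pr := ex_RInt_Reals_0 _ _ _ Hex).
    unfold c0. rewrite (improper_int_val _ _ _ (improper_int_tail _ _ _ pr Hint Hy')).
    rewrite <- RInt_Reals, (RInt_ext _ _ _ _ Hagree). f_equal. field.
Qed.

Lemma pfun_as_RInt (f : R -> R -> R) (u : R) (ct : R -> R) :
  (forall x, continuous ct x) -> (forall x, 0 < ct x) ->
  (forall y, y <= 0 -> c0 f u y = ct y) ->
  forall x, x <= 0 -> pfun f u x = RInt (fun y => / ct y) x 0.
Proof.
  intros ct_cont ct_pos ct_agree x Hx. unfold pfun.
  assert (Hagree : forall t, Rmin x 0 < t < Rmax x 0 -> / ct t = / c0 f u t).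
  { intros t Ht. rewrite Rmin_left, Rmax_right in Ht by lra.
    rewrite ct_agree by lra. reflexivity. }
  assert (Hex : ex_RInt (fun t => / ct t) x 0).
  { apply (@ex_RInt_continuous R_CompleteNormedModule); intros.
    apply continuous_Rinv_comp; [apply ct_cont| generalize (ct_pos z); lra]. }
  rewrite (Defs_RInt_val _ _ _ (ex_RInt_Reals_0 _ _ _ (ex_RInt_ext _ _ _ _ Hagree Hex))),
    <- RInt_Reals, <- (RInt_ext _ _ _ _ Hagree).
  reflexivity.
Qed.

Lemma scaled_cos_le_abs B s t : B * exp s * cos t <= Rabs B * exp s.
Proof.
  assert (He := exp_pos s). assert (Hc : Rabs (cos t) <= 1) by apply Rabs_le, COS_bound.
  assert (HB : B * cos t <= Rabs B).
  { eapply Rle_trans; [apply Rle_abs|]. rewrite Rabs_mult.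
    generalize (Rabs_pos B). nra. }
  nra.
Qed.

Theorem theorem2
  (q : R) (f fu : R -> R -> R) (M : R)
  (hq : 0 < q)
  (hf_nonneg : forall x u, x <= 0 -> 0 < u -> 0 <= f x u)
  (hf_cont : forall u, 0 < u -> forall x, x <= 0 -> forall eps, 0 < eps ->
      exists delta, 0 < delta /\ forall y, y <= 0 -> Rabs (y - x) < delta ->
        Rabs (f y u - f x u) < eps)
  (hf_int : forall u, 0 < u -> is_improper_int (fun x => f x u) 0 (q / 2))
  (hfu_deriv : forall x u, x <= 0 -> 0 < u ->
      derivable_pt_lim (fun v => f x v) u (fu x u))
  (hfu_cont : forall x u, x <= 0 -> 0 < u -> forall eps, 0 < eps ->
      exists delta, 0 < delta /\ forall x' u', x' <= 0 -> 0 < u' ->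
        Rabs (x' - x) < delta -> Rabs (u' - u) < delta ->
        Rabs (fu x' u' - fu x u) < eps)
  (hc0_pos : forall x, x <= 0 -> 0 < c0 f (2 * sqrt q) x)
  (hM : is_lub (fun y => exists x, x <= 0 /\
          y = Rabs (b0 f fu (2 * sqrt q) x * c0 f (2 * sqrt q) x)) M) :
  forall a b : R, M / c0 f (2 * sqrt q) 0 < a ->
    ~ dispersion_root f fu (2 * sqrt q) a b.
Proof.
  intros a b Ha [Hreal _].
  set (u := 2 * sqrt q) in *.
  assert (hu : 0 < u) by (unfold u; generalize (sqrt_lt_R0 q hq); lra).
  destruct (c0_continuous_extension f q u (hf_cont u hu) (hf_int u hu))
    as [ct [ct_cont ct_eq]].
  assert (ct_agree : forall y, y <= 0 -> c0 f u y = ct y)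
    by (intros y Hy; rewrite ct_eq, Rmin_left by exact Hy; reflexivity).
  assert (ct_pos : forall y, 0 < ct y) by (intro y; rewrite ct_eq; apply hc0_pos, Rmin_r).
  assert (c00 : 0 < c0 f u 0) by (apply hc0_pos; lra).
  assert (HbM : forall x, x <= 0 -> Rabs (b0 f fu u x * c0 f u x) <= M)
    by (intros x Hx; apply (proj1 hM); exists x; split; [exact Hx| reflexivity]).
  assert (a_pos : 0 < a).
  { eapply Rle_lt_trans; [|exact Ha]. apply Rmult_le_pos; [|left; apply Rinv_0_lt_compat, c00].
    eapply Rle_trans; [apply Rabs_pos| apply (HbM 0); lra]. }
  assert (Hle : c0 f u 0 <= M / a).
  { apply (improper_int_le _ _ _ _ Hreal). intros A pr HA.
    apply (partial_integral_bound ct ct_cont ct_pos a a_pos (b0 f fu u) _ M A pr HA).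
    - intros x Hx. rewrite <- ct_agree by lra. apply HbM; lra.
    - intros x Hx. rewrite (pfun_as_RInt f u ct ct_cont ct_pos ct_agree x) by lra.
      apply scaled_cos_le_abs. }
  apply Rmult_lt_compat_r with (r := c0 f u 0) in Ha; [|exact c00].
  apply Rmult_le_compat_r with (r := a) in Hle; [|lra].
  unfold Rdiv in Ha, Hle. rewrite Rmult_assoc, Rinv_l in Ha, Hle by lra. lra.
Qed.
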